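(* Let $d\ge1$ and let $C$ be a $(d+1)$-dimensional copula which is $\mathrm{LTD}^1_{d+1}$. Let $(U_1,\ldots,U_d,V)\sim C$, fix $\boldsymbol\alpha=(\alpha_1,\ldots,\alpha_d)\in[0,1)^d$ with $C(\alpha_1,\ldots,\alpha_d,1)<1$, and let $A_{\boldsymbol U}=\{\exists\, i:U_i>\alpha_i\}$. Then $V\le_{\rm st}V\mid A_{\boldsymbol U}$.
   Context: A $(d+1)$-dimensional copula $C$ is $\mathrm{LTD}^1_{d+1}$ if, for $(U_1,\ldots,U_d,V)\sim C$, $P(U_1\le u_1,\ldots,U_d\le u_d\mid V\le v)$ is nonincreasing in $v\in(0,1]$ for all $u_1,\ldots,u_d$ (i.e. $C(u_1,\ldots,u_d,v)/v$ is nonincreasing in $v$). $V\mid A$ denotes a random variable with the conditional distribution of $V$ given $A$. $Z_1\le_{\rm st}Z_2$ means $P(Z_1>x)\le P(Z_2>x)$ for all $x$. *)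

From HB Require Import structures.
From mathcomp Require Import all_boot all_order all_algebra.
From mathcomp Require Import all_classical all_reals all_analysis.
Set Implicit Arguments. Unset Strict Implicit. Unset Printing Implicit Defensive.
Import Order.TTheory GRing.Theory Num.Theory.
Local Open Scope classical_set_scope.
Local Open Scope ring_scope.

Definition prob (d0 : measure_display) (T : measurableType d0) (R : realType)
  (P : probability T R) (A : set T) : R := fine (P A).

Definition distributed_as (d0 : measure_display) (T : measurableType d0)
  (R : realType) (P : probability T R) (d : nat)
  (U : 'I_d -> {RV P >-> R}) (V : {RV P >-> R}) (C : ('I_d -> R) -> R -> R) :=
  forall (u : 'I_d -> R) (v : R), (forall i, 0 <= u i <= 1) -> 0 <= v <= 1 ->
    C u v = prob P [set t | (forall i, U i t <= u i) /\ V t <= v].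

(* All marginals are uniform on [0,1]; together with [distributed_as] this says
   that C is a (d+1)-dimensional copula and (U,V) ~ C. *)
Definition uniform_marginals (d0 : measure_display) (T : measurableType d0)
  (R : realType) (P : probability T R) (d : nat)
  (U : 'I_d -> {RV P >-> R}) (V : {RV P >-> R}) :=
  (forall i (x : R), 0 <= x <= 1 -> prob P [set t | U i t <= x] = x) /\
  (forall x : R, 0 <= x <= 1 -> prob P [set t | V t <= x] = x).

Definition LTD1 (R : realType) (d : nat) (C : ('I_d -> R) -> R -> R) :=
  forall u : 'I_d -> R, (forall i, 0 <= u i <= 1) ->
  forall v1 v2 : R, 0 < v1 -> v1 <= v2 -> v2 <= 1 -> C u v2 / v2 <= C u v1 / v1.

Definition cond_prob (d0 : measure_display) (T : measurableType d0)
  (R : realType) (P : probability T R) (B A : set T) : R :=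
  prob P (B `&` A) / prob P A.

From HB Require Import structures.
From mathcomp Require Import all_boot all_order all_algebra.
From mathcomp Require Import all_classical all_reals all_analysis.
From mathcomp Require Import lra.
Import Order.TTheory GRing.Theory Num.Theory.
Local Open Scope classical_set_scope.
Local Open Scope ring_scope.

(* With L = {U <= alpha} the complement of A_U, the claim P(V > x) <= P(V > x | A_U)
   is equivalent, after expanding both sides by inclusion-exclusion, to the
   positive dependence P(V <= x) P(L) <= P(L, V <= x).  For 0 < x <= 1 this reads
   x C(alpha, 1) <= C(alpha, x), which is LTD^1 applied between x and 1; for
   x <= 0 the left side vanishes, and for x > 1 it is at most P(L). *)

Section probability_facts.
Context {d0 : measure_display} {T : measurableType d0} {R : realType}.
Variable P : probability T R.

Lemma probE {A : set T} : measurable A -> P A = (prob P A)%:E.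
Proof. by move=> mA; rewrite /prob fineK // fin_num_measure. Qed.

Lemma prob_ge0 (A : set T) : 0 <= prob P A.
Proof. exact: fine_ge0. Qed.

Lemma prob_le1 {A : set T} : measurable A -> prob P A <= 1.
Proof. by move=> mA; rewrite -lee_fin -probE //; exact: probability_le1. Qed.

Lemma le_prob {A B : set T} :
  measurable A -> measurable B -> A `<=` B -> prob P A <= prob P B.
Proof.
move=> mA mB AB; rewrite -lee_fin -!probE //.
by apply: le_measure => //; rewrite inE.
Qed.

Lemma prob_setC {A : set T} : measurable A -> prob P (~` A) = 1 - prob P A.
Proof.
move=> mA; apply: EFin_inj.
by rewrite -probE ?probability_setC ?probE //; exact: measurableC.
Qed.

Lemma prob_setID {A B : set T} : measurable A -> measurable B ->
  prob P A = prob P (A `&` B) + prob P (A `&` ~` B).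
Proof.
move=> mA mB; have mBC := measurableC mB.
apply: EFin_inj; rewrite EFinD -!probE //; try exact: measurableI.
rewrite -measureU //; try exact: measurableI.
- by rewrite -setIUr setUv setIT.
- by rewrite -setIIr setICr setI0.
Qed.

Lemma prob_setI_eq1 {A B : set T} : measurable A -> measurable B ->
  prob P B = 1 -> prob P (A `&` B) = prob P A.
Proof.
move=> mA mB PB1.
have PBC0 : prob P (~` B) = 0 by rewrite prob_setC // PB1 subrr.
have : prob P (A `&` ~` B) <= prob P (~` B).
  by apply: le_prob; [apply: measurableI => //|..]; [exact: measurableC..|exact: subIsetr].
have := prob_ge0 (A `&` ~` B); rewrite (prob_setID mA mB); lra.
Qed.

Lemma prob_setCI {A B : set T} : measurable A -> measurable B ->
  prob P (~` A `&` ~` B) = 1 - prob P A - prob P B + prob P (A `&` B).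
Proof.
move=> mA mB.
have := prob_setID (measurableC mA) mB; have := prob_setID mB mA.
rewrite prob_setC // (setIC B) (setIC B); lra.
Qed.

Lemma prob_le_cond_probC {A B : set T} : measurable A -> measurable B ->
  prob P A < 1 -> prob P B * prob P A <= prob P (A `&` B) ->
  prob P (~` B) <= cond_prob P (~` B) (~` A).
Proof.
move=> mA mB PA1 corr.
rewrite /cond_prob prob_setCI // setIC !prob_setC // ler_pdivlMr ?subr_gt0 //.
lra.
Qed.

Lemma measurable_RV_le (X : {RV P >-> R}) (x : R) : measurable [set t | X t <= x].
Proof.
have -> : [set t | X t <= x] = X @^-1` [set` `]-oo, x]].
  by apply/seteqP; split=> t /=; rewrite in_itv.
exact: measurable_funPTI.
Qed.

End probability_facts.

Lemma LTD1_ge_mul (R : realType) (d : nat) (C : ('I_d -> R) -> R -> R)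
  (u : 'I_d -> R) (v : R) : LTD1 C -> (forall i, 0 <= u i <= 1) ->
  0 < v <= 1 -> v * C u 1 <= C u v.
Proof.
move=> ltd u01 /andP[v_gt0 v_le1].
by have := ltd u u01 v 1 v_gt0 v_le1 (lexx 1); rewrite divr1 ler_pdivlMr // mulrC.
Qed.

Section copula.
Context {d0 : measure_display} {T : measurableType d0} {R : realType}.
Context {P : probability T R} {d : nat}.
Variables (U : 'I_d -> {RV P >-> R}) (V : {RV P >-> R}) (C : ('I_d -> R) -> R -> R).

Definition lower_orthant (u : 'I_d -> R) : set T := [set t | forall i, U i t <= u i].

Lemma measurable_lower_orthant (u : 'I_d -> R) : measurable (lower_orthant u).
Proof.
have -> : lower_orthant u = \bigcap_(i in setT) [set t | U i t <= u i].
  by apply/seteqP; split=> [t Ht i _|t Ht i]; exact: Ht.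
by apply: fin_bigcap_measurable => [|i _]; [exact: finite_finset|exact: measurable_RV_le].
Qed.

Hypothesis V_uniform : forall x : R, 0 <= x <= 1 -> prob P [set t | V t <= x] = x.
Hypothesis UV_C : distributed_as U V C.

Lemma prob_lower_orthant (u : 'I_d -> R) :
  (forall i, 0 <= u i <= 1) -> prob P (lower_orthant u) = C u 1.
Proof.
move=> u01; rewrite (UV_C _ _ u01) ?ler01 ?lexx // -/(lower_orthant u).
rewrite prob_setI_eq1 ?V_uniform ?ler01 ?lexx //.
  exact: measurable_lower_orthant.
exact: measurable_RV_le.
Qed.

Lemma LTD1_lower_orthant_dependence (u : 'I_d -> R) (x : R) :
  LTD1 C -> (forall i, 0 <= u i <= 1) ->
  prob P [set t | V t <= x] * prob P (lower_orthant u) <=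
  prob P (lower_orthant u `&` [set t | V t <= x]).
Proof.
move=> ltd u01.
have mL := measurable_lower_orthant u; have mVle := measurable_RV_le P V.
have L_ge0 := prob_ge0 P (lower_orthant u).
have LV_ge0 := prob_ge0 P (lower_orthant u `&` [set t | V t <= x]).
have [x_le0|x_gt0] := leP x 0.
  have : prob P [set t | V t <= x] <= 0.
    rewrite -(V_uniform 0) ?lexx ?ler01 //.
    by apply: le_prob => // t /= /le_trans; apply.
  nra.
have [x_le1|x_gt1] := leP x 1.
  rewrite V_uniform ?(ltW x_gt0) // -(UV_C _ _ u01) ?(ltW x_gt0) //.
  by rewrite prob_lower_orthant //; apply: LTD1_ge_mul => //; rewrite x_gt0.
have : prob P (lower_orthant u) <= prob P (lower_orthant u `&` [set t | V t <= x]).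
  rewrite prob_lower_orthant // (UV_C _ _ u01) ?ler01 ?lexx //.
  apply: le_prob; [exact: (measurableI _ _ mL (mVle 1))|exact: measurableI|].
  by move=> t [Lt Vt]; split => //=; apply: le_trans (ltW x_gt1).
have := prob_le1 P (mVle x); nra.
Qed.

End copula.

Theorem lemmaB2 (d0 : measure_display) (T : measurableType d0) (R : realType)
  (P : probability T R) (d : nat) (U : 'I_d -> {RV P >-> R}) (V : {RV P >-> R})
  (C : ('I_d -> R) -> R -> R) (alpha : 'I_d -> R) :
  (0 < d)%N ->
  uniform_marginals U V ->
  distributed_as U V C ->
  LTD1 C ->
  (forall i, 0 <= alpha i < 1) ->
  C alpha 1 < 1 ->
  forall x : R,
    prob P [set t | x < V t] <=
    cond_prob P [set t | x < V t] [set t | exists i, alpha i < U i t].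
Proof.
move=> _ [_ V_uniform] UV_C ltd alpha01 C1 x.
have alpha_le1 i : 0 <= alpha i <= 1 by case/andP: (alpha01 i) => -> /ltW.
have -> : [set t | exists i, alpha i < U i t] = ~` lower_orthant U alpha.
  apply/seteqP; split=> t /=.
    by move=> [i Ui] /(_ i); rewrite leNgt Ui.
  by move=> /existsNP[i /negP]; rewrite -ltNge; exists i.
have -> : [set t | x < V t] = ~` [set t | V t <= x].
  by apply/seteqP; split=> t /=; rewrite ltNge => /negP.
apply: prob_le_cond_probC.
- exact: measurable_lower_orthant.
- exact: measurable_RV_le.
- by rewrite (prob_lower_orthant U V C V_uniform UV_C alpha alpha_le1).
- exact: (LTD1_lower_orthant_dependence U V C V_uniform UV_C alpha x ltd alpha_le1).
Qed.
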